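(* Let $k\ge1$ and $\epsilon$ with $0\le\epsilon\le1/2$, and assume $m^{\epsilon}\le\sqrt n$. Any deterministic coverage oracle that stores a datastructure of at most $b=nm^{1-2\epsilon}$ bits does not attain an approximation ratio of $O\!\left(\frac{m^{\epsilon-\delta}}{k\sqrt k}\right)$ for any constant $\delta>0$.
   Context: A set system with $n$ items and $m$ sets is a pair $(\mathcal X,\mathcal I)$ with $\mathcal X=\{1,\dots,n\}$ and $\mathcal I$ an indexed family of $m$ subsets of $\mathcal X$. For $k\ge1$ and a query $Q\subseteq\mathcal X$, $OPT(k,\mathcal X,\mathcal I,Q)=\max\{|(\bigcup_{S\in\mathcal J}S)\cap Q| : \mathcal J\subseteq\mathcal I,|\mathcal J|\le k\}$. A deterministic coverage oracle consists of a deterministic static stage mapping $(n,m,k,(\mathcal X,\mathcal I))$ to a bit string $\mathcal D$ (the datastructure), and a deterministic dynamic stage mapping $(\mathcal D,Q)$, for $Q\subseteq\mathcal X$, to (indices of) $\mathcal J\subseteq\mathcal I$ with $|\mathcal J|\le k$, without access to $(\mathcal X,\mathcal I)$; $\mathcal A(k,\mathcal X,\mathcal I,Q)=|(\bigcup_{S\in\mathcal J}S)\cap Q|$. The approximation ratio is $\max OPT/\mathcal A$ over all set systems with $n$ items and $m$ sets and all queries $Q$. No computational restrictions are assumed. *)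

From mathcomp Require Import all_boot.
From Stdlib Require Import Reals.

Set Implicit Arguments.
Unset Strict Implicit.
Unset Printing Implicit Defensive.

Definition set_system (n m : nat) := 'I_m -> {set 'I_n}.

Definition coverage (n m : nat) (I : set_system n m) (Q : {set 'I_n})
  (J : {set 'I_m}) : nat :=
  #|(\bigcup_(j in J) I j) :&: Q|.

Definition OPT (n m : nat) (k : nat) (I : set_system n m) (Q : {set 'I_n}) : nat :=
  \max_(J : {set 'I_m} | #|J| <= k) coverage I Q J.

(* Take the Reed-Solomon code over F_p: the graphs {(x, P x)} of the polynomials
   P of degree at most d are sets of size p in the n = p^2 points of F_p x F_p,
   and two of them meet in at most d points.  Store m of these sets in the order
   given by a permutation sg and ask for the set c t.  One set covers p items of
   the query while every other set covers at most d of them, so an oracle whose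
   ratio beats p / (k d) must return the index sg^-1 t of c t for every t.  The
   datastructure then determines sg up to the k^m choices of these answers, which
   forces (b+1) 2^b k^m >= m!.  With m = floor(p^(1/eps)) the budget
   b = n m^(1 - 2 eps) is at most m + 1 bits, and m! outgrows that bound. *)

From Stdlib Require Import Reals Lra Lia ZArith.
From mathcomp Require Import all_boot all_algebra all_fingroup.

Set Implicit Arguments.
Unset Strict Implicit.
Unset Printing Implicit Defensive.

Section PolynomialCode.
Import GRing.Theory.
Local Open Scope ring_scope.
Variable F : finFieldType.

Definition poly_graph (P : {poly F}) : {set 'I_#|{: F * F}|} :=
  [set enum_rank (x, P.[x]) | x : F].

Lemma card_poly_graph P : #|poly_graph P| = #|F|.
Proof. by rewrite card_imset // => x y /enum_rank_inj []. Qed.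

Lemma card_poly_graphI P Q :
  P != Q -> (#|poly_graph P :&: poly_graph Q| < size (P - Q)%R)%N.
Proof.
rewrite -subr_eq0 => PQ_neq0.
have roots_small := max_poly_roots PQ_neq0 (rs := enum (root (P - Q))).
rewrite enum_uniq -cardE in roots_small.
apply: leq_ltn_trans (roots_small _ isT); last first.
  by apply/allP => x; rewrite mem_enum.
apply: leq_trans (leq_imset_card (fun x => enum_rank (x, P.[x])) _).
apply/subset_leq_card/subsetP => z /setIP[/imsetP[x _ ->] /imsetP[y _]].
move/enum_rank_inj => [<- Px_eq]; apply/imsetP; exists x => //.
by rewrite unfold_in /root hornerD hornerN Px_eq subrr.
Qed.

Lemma Poly_tuple_inj d : injective (fun t : d.-tuple F => Poly t).
Proof.
move=> t u /= tu_eq; apply: eq_from_tnth => i.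
by have := congr1 (fun P : {poly F} => P`_i) tu_eq; rewrite /= !coef_Poly -!tnth_nth.
Qed.

Lemma polynomial_code d m : (m <= #|F| ^ d.+1)%N ->
  exists c : 'I_m -> {set 'I_#|{: F * F}|},
    (forall t, #|c t| = #|F|) /\ (forall u t, u != t -> #|c u :&: c t| <= d)%N.
Proof.
move=> m_le; have {}m_le : (m <= #|{: d.+1.-tuple F}|)%N by rewrite card_tuple.
pose P (t : 'I_m) : {poly F} := Poly (enum_val (widen_ord m_le t)).
exists (fun t => poly_graph (P t)); split => [t | u t ut]; first exact: card_poly_graph.
have P_neq : P u != P t.
  apply: contra ut => /eqP/Poly_tuple_inj/enum_val_inj/(congr1 val)/= ut_eq.
  by apply/eqP/val_inj.
rewrite -ltnS (leq_trans (card_poly_graphI P_neq)) //.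
apply: leq_trans (size_polyD _ _) _; rewrite size_polyN geq_max.
by rewrite !(leq_trans (size_Poly _)) // size_tuple.
Qed.

End PolynomialCode.

Section Coverage.
Variables n m : nat.
Implicit Types (I : set_system n m) (Q : {set 'I_n}) (J : {set 'I_m}).

Lemma coverage_le_OPT k I Q J : #|J| <= k -> coverage I Q J <= OPT k I Q.
Proof. by move=> J_le; apply: (@leq_bigmax_cond _ (fun J => #|J| <= k)). Qed.

Lemma card_setI_le_OPT k I Q j : 0 < k -> #|I j :&: Q| <= OPT k I Q.
Proof.
move=> k_gt0; have -> : #|I j :&: Q| = coverage I Q [set j].
  by rewrite /coverage big_set1.
by apply: coverage_le_OPT; rewrite cards1.
Qed.

Lemma coverage_le_sum_overlap I Q J :
  coverage I Q J <= \sum_(j in J) #|I j :&: Q|.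
Proof.
rewrite /coverage big_distrl /=.
elim/big_rec2: _ => [|j x A _ A_le]; first by rewrite cards0.
by rewrite (leq_trans (leq_card_setU _ _).1) ?leq_add2l.
Qed.

Lemma coverage_le_overlap d I Q J :
  (forall j, j \in J -> #|I j :&: Q| <= d) -> coverage I Q J <= #|J| * d.
Proof.
move=> overlap_le; rewrite -sum_nat_const.
by apply: leq_trans (coverage_le_sum_overlap I Q J) _; apply: leq_sum.
Qed.

Lemma coverage_le_card_items I Q J : coverage I Q J <= n.
Proof. by rewrite /coverage (leq_trans (max_card _)) ?card_ord. Qed.

End Coverage.

Section PermutedCode.
Variables (n m k : nat) (c : 'I_m -> {set 'I_n}).

Definition permuted_system (sg : {perm 'I_m}) : set_system n m := fun j => c (sg j).

Variables (D : finType) (static : set_system n m -> D)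
  (dynamic : D -> {set 'I_n} -> {set 'I_m}).
Hypothesis card_dynamic : forall I Q, #|dynamic (static I) Q| <= k.

(* permuted_system sg stores the query set c t under the index sg^-1 t. *)
Definition recovers_code (sg : {perm 'I_m}) : bool :=
  [forall t, (sg^-1)%g t \in dynamic (static (permuted_system sg)) (c t)].

Lemma card_recovers_code_with_data (x : D) :
  #|[set sg | recovers_code sg & static (permuted_system sg) == x]| <= k ^ m.
Proof.
set S := [set sg | _ & _].
case: (set_0Vmem S) => [-> | [sg0]]; first by rewrite cards0.
rewrite inE => /andP[_ /eqP data_eq].
pose inv_graph (sg : {perm 'I_m}) := [ffun t => (sg^-1)%g t].
have inv_inj : {in S &, injective inv_graph}.
  move=> s1 s2 _ _ /ffunP s12; apply: invg_inj; apply/permP => t.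
  by have := s12 t; rewrite !ffunE.
rewrite -(card_in_imset inv_inj).
have sub_family : inv_graph @: S
    \subset (family (fun t => mem (dynamic x (c t))) : simpl_pred _).
  apply/subsetP => _ /imsetP[sg + ->]; rewrite inE => /andP[/forallP rec /eqP <-].
  by apply/familyP => t; rewrite ffunE; apply: rec.
apply: leq_trans (subset_leq_card sub_family) _.
rewrite card_family foldrE big_map big_enum /= -[m in k ^ m]card_ord -prod_nat_const.
by apply: leq_prod => t _; rewrite -data_eq card_dynamic.
Qed.

Lemma fact_le_of_recovers_code :
  (forall sg, recovers_code sg) -> m`! <= #|D| * k ^ m.
Proof.
move=> rec; rewrite -card_Sn -sum1_card.
rewrite (partition_big (static \o permuted_system) xpredT) //=.
rewrite -sum_nat_const; apply: leq_sum => x _.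
apply: leq_trans (card_recovers_code_with_data x); rewrite -sum1_card.
by apply: eq_leq; apply: eq_bigl => sg; rewrite inE rec.
Qed.

Variables (s d : nat).
Hypothesis card_code : forall t, #|c t| = s.
Hypothesis code_overlap : forall u t, u != t -> #|c u :&: c t| <= d.

Lemma permuted_code_fools_oracle :
  0 < k -> #|D| * k ^ m < m`! ->
  exists I Q, coverage I Q (dynamic (static I) Q) <= k * d /\ s <= OPT k I Q.
Proof.
move=> k_gt0 count_lt.
have [sg /forallPn[t miss]] : exists sg, ~~ recovers_code sg.
  apply/existsP; apply: contraLR count_lt => /existsPn all_rec.
  by rewrite -leqNgt fact_le_of_recovers_code // => sg; rewrite -[recovers_code _]negbK.
exists (permuted_system sg), (c t); split.
  apply: leq_trans (coverage_le_overlap (d := d) _) _; last first.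
    by rewrite leq_mul2r card_dynamic orbT.
  move=> j j_in; apply: code_overlap; apply: contraNneq miss => sg_j.
  by rewrite -sg_j permK sg_j.
have -> : s = #|permuted_system sg ((sg^-1)%g t) :&: c t|.
  by rewrite /permuted_system permKV setIid card_code.
exact: card_setI_le_OPT.
Qed.

End PermutedCode.

Lemma card_bseq_bool_le B : #|{bseq B of bool}| <= B.+1 * 2 ^ B.
Proof.
rewrite card_bseq card_bool; apply: (@leq_trans (\sum_(i < B.+1) 2 ^ B)).
  by apply: leq_sum => i _; rewrite leq_pexp2l // -ltnS.
by rewrite sum_nat_const card_ord.
Qed.

Lemma bounded_oracle_fooled n m k B s d (c : 'I_m -> {set 'I_n})
    (static : set_system n m -> seq bool)
    (dynamic : seq bool -> {set 'I_n} -> {set 'I_m}) :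
  0 < k -> B.+1 * 2 ^ B * k ^ m < m`! ->
  (forall t, #|c t| = s) -> (forall u t, u != t -> #|c u :&: c t| <= d) ->
  (forall I Q, #|dynamic (static I) Q| <= k) ->
  (forall I, size (static I) <= B) ->
  exists I Q, coverage I Q (dynamic (static I) Q) <= k * d /\ s <= OPT k I Q.
Proof.
move=> k_gt0 count_lt card_c c_overlap card_dynamic size_static.
pose bits I : {bseq B of bool} := insub_bseq B (static I).
have bitsK I : bits I = static I :> seq bool.
  by rewrite /bits /insub_bseq insubdK //; apply: size_static.
pose dynamic_bits (x : {bseq B of bool}) := dynamic x.
have card_dynamic_bits I Q : #|dynamic_bits (bits I) Q| <= k by rewrite /dynamic_bits bitsK.
have [|I [Q]] := permuted_code_fools_oracle card_dynamic_bits card_c c_overlap k_gt0.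
  by apply: leq_ltn_trans count_lt; rewrite leq_mul2r card_bseq_bool_le orbT.
by rewrite /dynamic_bits bitsK; exists I, Q.
Qed.

Lemma expn_le_fact a j : a ^ j <= (a + j)`!.
Proof.
elim: j => [|j IHj]; first by rewrite fact_gt0.
by rewrite addnS factS expnS leq_mul // (leq_trans (leq_addr j a)).
Qed.

Lemma exp_lt_fact_eventually a :
  0 < a -> exists N, forall m, N <= m -> 4 * a ^ m < m`!.
Proof.
move=> a_gt0; exists (2 * a + 4 * a ^ (2 * a)) => m m_ge.
have -> : m = 2 * a + (m - 2 * a) by rewrite subnKC // (leq_trans (leq_addr _ _) m_ge).
set j := m - 2 * a.
have j_ge : 4 * a ^ (2 * a) <= j by rewrite leq_subRL ?(leq_trans (leq_addr _ _) m_ge).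
apply: leq_trans (expn_le_fact _ _).
rewrite expnD mulnA expnMn ltn_pmul2r ?expn_gt0 ?a_gt0 //.
exact: leq_ltn_trans j_ge (ltn_expl _ _).
Qed.

Lemma perm_count_lt_fact_eventually k :
  exists N, forall m, N <= m -> m.+2 * 2 ^ m.+1 * k ^ m < m`!.
Proof.
have [N fact_gt] := @exp_lt_fact_eventually (4 * k.+1) isT.
exists N => m /fact_gt; apply: leq_ltn_trans.
have -> : 4 * (4 * k.+1) ^ m = 2 ^ m.+1 * 2 ^ m.+1 * k.+1 ^ m.
  by rewrite expnMn mulnA -expnS -expnMn.
have k_exp : k ^ m <= k.+1 ^ m by elim: (m) => // i IHi; rewrite !expnS leq_mul.
by rewrite leq_mul // leq_mul // ltn_expl.
Qed.

(* all_algebra rebinds the keys %R and %Z to ring_scope and int_scope. *)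
Delimit Scope R_scope with R.
Delimit Scope Z_scope with Z.

Section RealBounds.
Local Open Scope R_scope.

Lemma nat_floor x : 0 <= x -> exists m : nat, INR m <= x < INR m + 1.
Proof.
move=> x_ge0; have [int_le int_gt] := base_Int_part x.
have int_ge0 : (0 <= Int_part x)%Z.
  have : (-1 < Int_part x)%Z by apply: lt_IZR; lra.
  lia.
by exists (Z.to_nat (Int_part x)); rewrite INR_IZR_INZ Z2Nat.id //; lra.
Qed.

Lemma INR_expn p n : INR (p ^ n) = INR p ^ n.
Proof. by elim: n => [|n IHn] //; rewrite expnS mult_INR IHn. Qed.

Lemma Rpower_Rinv_r a e : 0 < a -> e <> 0 -> Rpower (Rpower a (/ e)) e = a.
Proof. by move=> a_gt0 e_neq0; rewrite Rpower_mult Rinv_l // Rpower_1. Qed.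

Lemma Rpower_unbounded K e :
  0 < e -> exists N, forall m, (N <= m)%N -> K < Rpower (INR m) e.
Proof.
move=> e_gt0; set X := Rabs K + 1.
have X_gt0 : 0 < X by have := Rabs_pos K; rewrite /X; lra.
have [N [N_le N_gt]] := nat_floor (Rlt_le _ _ (exp_pos (/ e * ln X))).
exists N.+1 => m /leP/le_INR; rewrite S_INR => m_ge.
have root_lt : Rpower X (/ e) < INR m by rewrite /Rpower; lra.
have := Rlt_Rpower_l _ _ _ e_gt0 (conj (exp_pos _) root_lt).
by rewrite Rpower_Rinv_r; [have := Rle_abs K; rewrite /X; lra | lra | lra].
Qed.

Lemma bit_budget_le (eps : R) (p m : nat) :
  0 < eps <= 1 / 2 -> (0 < m)%N -> INR p < Rpower (INR m + 1) eps ->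
  INR (p * p) * Rpower (INR m) (1 - 2 * eps) <= INR m.+1.
Proof.
move=> [eps_gt0 eps_le] /ltP/lt_INR m_gt0 p_lt; rewrite /= in m_gt0.
have p_ge0 := pos_INR p.
have m1_eq : INR m.+1 = Rpower (INR m + 1) eps * Rpower (INR m + 1) eps
                         * Rpower (INR m + 1) (1 - 2 * eps).
  rewrite -!Rpower_plus S_INR.
  have -> : eps + eps + (1 - 2 * eps) = 1 by ring.
  by rewrite Rpower_1 //; lra.
rewrite m1_eq mult_INR; apply: Rmult_le_compat.
- by apply: Rmult_le_pos.
- exact: Rlt_le (exp_pos _).
- by apply: Rmult_le_compat; lra.
- by apply: Rle_Rpower_l; lra.
Qed.

Lemma floor_root_spec (eps : R) (d p : nat) :
  0 < eps <= 1 / 2 -> / eps <= INR d.+1 -> (0 < p)%N ->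
  exists m, [/\ (p <= m)%N, Rpower (INR m) eps <= INR p,
    INR (p * p) * Rpower (INR m) (1 - 2 * eps) <= INR m.+1 & (m <= p ^ d.+1)%N].
Proof.
move=> [eps_gt0 eps_le] d_ge p_gt0.
have p_ge1 : 1 <= INR p by apply: (le_INR 1); apply/leP.
have inv_ge1 : 1 <= / eps.
  by apply: (Rmult_le_reg_l eps) => //; rewrite Rinv_r; lra.
set x := Rpower (INR p) (/ eps).
have x_root : Rpower x eps = INR p by apply: Rpower_Rinv_r; lra.
have [m [m_le m_gt]] := @nat_floor x (Rlt_le _ _ (exp_pos _)).
have p_le_x : INR p <= x.
  by rewrite -{1}(Rpower_1 (INR p)); [apply: Rle_Rpower; lra | lra].
have p_le_m : (p <= m)%N.
  by rewrite -ltnS; apply/ltP/INR_lt; rewrite S_INR; lra.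
have m_ge1 : 1 <= INR m by apply: Rle_trans p_ge1 (le_INR _ _ (elimT leP p_le_m)).
exists m; split => //.
- by rewrite -x_root; apply: Rle_Rpower_l; lra.
- apply: bit_budget_le => //; first exact: leq_trans p_gt0 p_le_m.
  by rewrite -x_root; apply: Rlt_Rpower_l; lra.
- apply/leP/INR_le; rewrite INR_expn -Rpower_pow; last lra.
  by apply: Rle_trans m_le (Rle_Rpower _ _ _ p_ge1 d_ge).
Qed.

Lemma ratio_lt (C eps delta : R) (k d p m cov opt : nat) :
  0 < C -> (0 < k)%N -> (0 < p)%N -> (0 < m)%N ->
  Rpower (INR m) eps <= INR p -> C * INR d < Rpower (INR m) delta ->
  (cov <= k * d)%N -> (p <= opt)%N ->
  C * Rpower (INR m) (eps - delta) / (INR k * sqrt (INR k)) * INR cov < INR opt.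
Proof.
move=> C_gt0 /leP/(le_INR 1) k_ge1 /ltP/lt_INR p_gt0 /ltP/lt_INR m_gt0 m_eps_le Cd_lt
  /leP/le_INR cov_le /leP/le_INR p_le.
rewrite [INR 1]/= in k_ge1; rewrite [INR 0]/= in p_gt0 m_gt0; rewrite mult_INR in cov_le.
have sqrt_k_ge1 : 1 <= sqrt (INR k) by rewrite -sqrt_1; apply: sqrt_le_1_alt.
have K_ge1 : 1 <= INR k * sqrt (INR k) by nra.
have cov_div_le : INR cov / (INR k * sqrt (INR k)) <= INR d.
  apply: (Rmult_le_reg_r (INR k * sqrt (INR k))); first lra.
  rewrite /Rdiv Rmult_assoc Rinv_l; last lra.
  have dk_ge0 : 0 <= INR k * INR d by have := pos_INR d; nra.
  nra.
set a := Rpower (INR m) eps in m_eps_le *; set y := Rpower (INR m) delta in Cd_lt *.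
have a_ge0 : 0 <= a by apply: Rlt_le; apply: exp_pos.
have y_gt0 : 0 < y by apply: exp_pos.
have -> : Rpower (INR m) (eps - delta) = a / y by rewrite Rpower_plus Rpower_Ropp.
have -> : C * (a / y) / (INR k * sqrt (INR k)) * INR cov
          = C / y * a * (INR cov / (INR k * sqrt (INR k))) by field; lra.
set w := C / y; set z := INR cov / _ in cov_div_le *.
have w_ge0 : 0 <= w by apply: Rlt_le; apply: Rdiv_lt_0_compat.
have wd_lt1 : w * INR d < 1.
  apply: (Rmult_lt_reg_r y) => //.
  by rewrite /w (_ : C / y * INR d * y = C * INR d); [lra | field; lra].
have z_ge0 : 0 <= z.
  apply: Rmult_le_pos; first exact: pos_INR.
  by apply/Rlt_le/Rinv_0_lt_compat; lra.
have : w * a * z <= INR p * (w * INR d).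
  rewrite (_ : INR p * (w * INR d) = w * INR p * INR d); last ring.
  by apply: Rmult_le_compat; [nra | lra | nra | lra].
nra.
Qed.

End RealBounds.

Definition ratio_unattainable_at (k : nat) (eps delta C : R) (n m : nat) : Prop :=
  (Rpower (INR m) eps <= sqrt (INR n))%R /\
  forall (static : set_system n m -> seq bool)
         (dynamic : seq bool -> {set 'I_n} -> {set 'I_m}),
    (forall (I : set_system n m) (Q : {set 'I_n}),
        (#|dynamic (static I) Q| <= k)%N) ->
    (forall I : set_system n m,
        (INR (size (static I)) <= INR n * Rpower (INR m) (1 - 2 * eps))%R) ->
    exists (I : set_system n m) (Q : {set 'I_n}),
      (C * Rpower (INR m) (eps - delta) / (INR k * sqrt (INR k))
         * INR (coverage I Q (dynamic (static I) Q))
       < INR (OPT k I Q))%R.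

(* For eps = 0 the target ratio C m^-delta / (k sqrt k) drops below 1, so one
   item defeats every oracle. *)
Lemma ratio_unattainable_eps0 k delta C M0 :
  (0 < k)%N -> (0 < delta)%R -> (0 < C)%R ->
  exists n m, (M0 <= m)%N /\ ratio_unattainable_at k 0 delta C n m.
Proof.
move=> k_gt0 delta_gt0 C_gt0; have [N N_gt] := Rpower_unbounded C delta_gt0.
exists 1%N, (maxn M0 N).+1; split; first by rewrite leqW ?leq_maxl.
have m_gt0 : (0 < INR (maxn M0 N).+1)%R by apply: lt_0_INR; apply/ltP.
split; first by rewrite Rpower_O // sqrt_1; lra.
move=> static dynamic _ _; exists (fun _ => setT), setT.
apply: (@ratio_lt _ _ _ k 1 1) => //.
- by rewrite Rpower_O //; simpl; lra.
- by rewrite Rmult_1_r; apply: N_gt; rewrite leqW ?leq_maxr.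
- by rewrite muln1 (leq_trans (coverage_le_card_items _ _ _)).
- apply: leq_trans (card_setI_le_OPT (fun _ => setT) setT ord0 k_gt0).
  by rewrite setIid cardsT card_ord.
Qed.

Lemma ratio_unattainable_pos k eps delta C M0 :
  (0 < k)%N -> (0 < eps <= 1 / 2)%R -> (0 < delta)%R -> (0 < C)%R ->
  exists n m, (M0 <= m)%N /\ ratio_unattainable_at k eps delta C n m.
Proof.
move=> k_gt0 eps_bounds delta_gt0 C_gt0.
have [d [_ d_gt]] := nat_floor (Rlt_le _ _ (Rinv_0_lt_compat _ (proj1 eps_bounds))).
have d_ge : (/ eps <= INR d.+1)%R by rewrite S_INR; lra.
have [N1 N1_gt] := Rpower_unbounded (C * INR d) delta_gt0.
have [N2 N2_gt] := perm_count_lt_fact_eventually k.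
have [p p_gt p_prime] := prime_above (maxn M0 (maxn N1 N2)).
have p_gt0 := prime_gt0 p_prime.
have [m [p_le_m m_eps_le budget m_le]] := floor_root_spec eps_bounds d_ge p_gt0.
have /and3P[M0_le N1_le N2_le] : [&& M0 <= m, N1 <= m & N2 <= m].
  by rewrite -!geq_max (leq_trans (ltnW p_gt) p_le_m).
have card_n : #|{: 'F_p * 'F_p}| = (p * p)%N by rewrite card_prod card_Fp.
exists #|{: 'F_p * 'F_p}|, m; split => //; split.
  by rewrite card_n mult_INR sqrt_square //; apply: pos_INR.
move=> static dynamic card_dynamic size_static.
have m_le_code : (m <= #|'F_p| ^ d.+1)%N by rewrite card_Fp.
have [c [card_c c_overlap]] := polynomial_code m_le_code.
have size_le I : (size (static I) <= m.+1)%N.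
  by apply/leP/INR_le; apply: Rle_trans (size_static I) _; rewrite card_n.
have [I [Q [cov_le opt_ge]]] :=
  bounded_oracle_fooled k_gt0 (N2_gt m N2_le) card_c c_overlap card_dynamic size_le.
exists I, Q; rewrite card_Fp // in opt_ge.
exact: ratio_lt C_gt0 k_gt0 p_gt0 (leq_trans p_gt0 p_le_m) m_eps_le (N1_gt m N1_le)
  cov_le opt_ge.
Qed.

Theorem mainTheorem9 (k : nat) (eps delta : R) :
  (1 <= k)%N -> (0 <= eps <= 1 / 2)%R -> (0 < delta)%R ->
  forall C : R, (0 < C)%R ->
  forall M0 : nat,
  exists n m : nat,
    (M0 <= m)%N /\
    (Rpower (INR m) eps <= sqrt (INR n))%R /\
    forall (static : set_system n m -> seq bool)
           (dynamic : seq bool -> {set 'I_n} -> {set 'I_m}),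
      (forall (I : set_system n m) (Q : {set 'I_n}),
          (#|dynamic (static I) Q| <= k)%N) ->
      (forall I : set_system n m,
          (INR (size (static I)) <= INR n * Rpower (INR m) (1 - 2 * eps))%R) ->
      exists (I : set_system n m) (Q : {set 'I_n}),
        (C * Rpower (INR m) (eps - delta) / (INR k * sqrt (INR k))
           * INR (coverage I Q (dynamic (static I) Q))
         < INR (OPT k I Q))%R.
Proof.
move=> k_gt0 [eps_ge0 eps_le] delta_gt0 C C_gt0 M0.
case: (Rle_lt_or_eq_dec _ _ eps_ge0) => [eps_gt0 | <-].
  exact: ratio_unattainable_pos.
exact: ratio_unattainable_eps0.
Qed.
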